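(* Let $x,y\in\mathbb R^d$ with $\|x\|_2\le1$, $\|y\|_2\le1$, and let $\sigma\in C^1(\mathbb R)$ satisfy $\sigma(0)=0$ and $\|\sigma'\|_\infty\le1$. Let $a\sim\mathcal N(0,1)$ and $w\sim\mathcal N(0,I_d)$. Then for any $\varepsilon>0$: (i) $X_1:=\frac1{\varepsilon^2}\sigma(\varepsilon w^\top x)\sigma(\varepsilon w^\top y)$ satisfies $\|X_1\|_{\psi_1}\le C_{\psi,d}$; (ii) $X_2:=a^2\sigma'(\varepsilon w^\top x)\sigma'(\varepsilon w^\top y)\langle x,y\rangle$ satisfies $\|X_2\|_{\psi_1}\le C_{\psi,1}$.
   Context: The sub-exponential norm of a random variable $X$ is $\|X\|_{\psi_1}:=\inf\{s>0:\mathbb E\exp(|X|/s)\le2\}$. $C_{\psi,d}$ denotes the sub-exponential norm of a chi-square random variable with $d$ degrees of freedom. *)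

From HB Require Import structures.
From mathcomp Require Import all_boot all_order all_algebra.
From mathcomp Require Import all_classical all_reals all_analysis.
From mathcomp Require Export normal_distribution.
Set Implicit Arguments. Unset Strict Implicit. Unset Printing Implicit Defensive.
Import Order.TTheory GRing.Theory Num.Theory.
Import numFieldNormedType.Exports.
Local Open Scope classical_set_scope.
Local Open Scope ring_scope.

(* Sub-exponential (psi_1) norm:
   ||X||_{psi_1} = inf { s > 0 : E exp(|X|/s) <= 2 }  (in the extended reals;
   inf of the empty set is +oo). *)
Definition psi1_norm {d} {T : measurableType d} {R : realType}
  (P : probability T R) (X : T -> R) : \bar R :=
  ereal_inf [set s%:E | s in [set s : R | 0 < s /\
     (\int[P]_t (expR (`|X t| / s))%:E <= 2%:E)%E]].

Definition mutually_independent {d} {T : measurableType d} {R : realType}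
  (P : probability T R) (I : finType) (Z : I -> T -> R) : Prop :=
  forall B : I -> set R, (forall i, measurable (B i)) ->
    P (\bigcap_(i in [set: I]) (Z i @^-1` B i)) =
    (\prod_(i : I) P (Z i @^-1` B i))%E.

Definition std_gaussian {d} {T : measurableType d} {R : realType}
  (P : probability T R) (X : T -> R) : Prop :=
  measurable_fun setT X /\
  forall A : set R, measurable A -> P (X @^-1` A) = normal_prob 0 1 A.

From HB Require Import structures.
From mathcomp Require Import all_boot all_order all_algebra.
From mathcomp Require Import all_classical all_reals all_analysis.
From mathcomp Require Import ring.
Import Order.TTheory GRing.Theory Num.Theory.
Import numFieldNormedType.Exports.
Local Open Scope classical_set_scope.
Local Open Scope ring_scope.

(* Both variables are dominated pointwise by the chi-square variable they are
   compared with, and the psi_1 norm is monotone under pointwise domination of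
   absolute values.  Since sigma(0) = 0 and |sigma'| <= 1, |sigma t| <= |t|, so
   |X_1| <= |w^T x| |w^T y| <= ||w||^2 by Cauchy-Schwarz and ||x||, ||y|| <= 1;
   likewise |X_2| <= a^2 because |sigma'| <= 1 and |<x, y>| <= 1. *)

Section CauchySchwarz.
Context {R : realFieldType} {n : nat}.
Implicit Types u v : 'I_n -> R.

Lemma lagrange_identity u v :
  \sum_i \sum_j (u i * v j - u j * v i) ^+ 2 =
  2 * ((\sum_i u i ^+ 2) * (\sum_i v i ^+ 2) - (\sum_i u i * v i) ^+ 2).
Proof.
have uv_vu : (\sum_i u i ^+ 2) * (\sum_i v i ^+ 2) =
    \sum_i \sum_j u j ^+ 2 * v i ^+ 2.
  by rewrite mulrC big_distrlr; apply: eq_bigr => i _; apply: eq_bigr => j _; rewrite mulrC.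
have -> : 2 * ((\sum_i u i ^+ 2) * (\sum_i v i ^+ 2) - (\sum_i u i * v i) ^+ 2) =
    (\sum_i u i ^+ 2) * (\sum_i v i ^+ 2) + (\sum_i u i ^+ 2) * (\sum_i v i ^+ 2)
    - (\sum_i u i * v i) * (\sum_i u i * v i) *+ 2 by ring.
rewrite {2}uv_vu !big_distrlr -big_split -sumrMnl -sumrB /=.
apply: eq_bigr => i _; rewrite -big_split -sumrMnl -sumrB /=.
by apply: eq_bigr => j _; ring.
Qed.

Lemma sum_mul_sqr_le u v :
  (\sum_i u i * v i) ^+ 2 <= (\sum_i u i ^+ 2) * (\sum_i v i ^+ 2).
Proof.
rewrite -subr_ge0 -(pmulr_rge0 _ (ltr0Sn _ 1)) -lagrange_identity.
by do 2![apply: sumr_ge0 => ? _]; apply: sqr_ge0.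
Qed.

Lemma sum_mul_sqr_le_unit u v : \sum_i v i ^+ 2 <= 1 ->
  (\sum_i u i * v i) ^+ 2 <= \sum_i u i ^+ 2.
Proof.
move=> v_le1; apply: le_trans (sum_mul_sqr_le u v) _.
by rewrite ler_piMr // sumr_ge0 // => i _; apply: sqr_ge0.
Qed.

End CauchySchwarz.

Section Contraction.
Context {R : realType}.
Variable f : R -> R.
Hypothesis f_derivable : forall t, derivable f t 1.

Lemma ler_dist_derive1 (k : R) : (forall t, `|derive1 f t| <= k) ->
  forall s t, `|f t - f s| <= k * `|t - s|.
Proof.
move=> f'_le_k.
have f_cont : continuous f.
  by move=> t; apply/differentiable_continuous/derivable1_diffP.
suff le_st s t : s <= t -> `|f t - f s| <= k * `|t - s|.
  move=> s t; have [/le_st //|/ltW/le_st] := leP s t.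
  by rewrite distrC [`|s - t|]distrC.
have f' (z : R) : is_derive z 1 f (derive1 f z).
  by rewrite derive1E; apply: derivableP.
move=> st; have [c _ ->] := MVT_segment st (fun z _ => f' z)
  (continuous_subspaceT f_cont).
by rewrite normrM ler_wpM2r.
Qed.

Lemma ler_norm_contraction : f 0 = 0 -> (forall t, `|derive1 f t| <= 1) ->
  forall t, `|f t| <= `|t|.
Proof.
by move=> f0 f'_le1 t; have := ler_dist_derive1 _ f'_le1 0 t; rewrite f0 !subr0 mul1r.
Qed.

End Contraction.

Section PsiOneNorm.
Context {d : measure_display} {T : measurableType d} {R : realType}.
Variable P : probability T R.

(* No measurability is required: both integrals are suprema over the simple
   functions below the integrand. *)
Lemma ge0_le_integralT (f g : T -> \bar R) : (forall t, (0 <= f t)%E) ->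
  (forall t, (f t <= g t)%E) -> (\int[P]_t f t <= \int[P]_t g t)%E.
Proof.
move=> f0 fg; have g0 t : (0 <= g t)%E by apply: le_trans (f0 t) (fg t).
rewrite !ge0_integralTE //; apply: ereal_sup_le => _ [h hf <-].
by exists h => // t; apply: le_trans (hf t) (fg t).
Qed.

Lemma le_psi1_norm (X Y : T -> R) : (forall t, `|X t| <= `|Y t|) ->
  (psi1_norm P X <= psi1_norm P Y)%E.
Proof.
move=> XY; apply: ereal_inf_le_tmp => _ [s [s_gt0 int_le2] <-].
exists s => //; split => //; apply: le_trans int_le2.
apply: ge0_le_integralT => t; first by rewrite lee_fin expR_ge0.
by rewrite lee_fin ler_expR ler_wpM2r // invr_ge0 ltW.
Qed.

End PsiOneNorm.

Lemma ler_norm_mul_sqr {R : realFieldType} (p q s : R) :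
  p ^+ 2 <= s -> q ^+ 2 <= s -> `|p| * `|q| <= s.
Proof.
rewrite -(real_normK (num_real p)) -(real_normK (num_real q)) !expr2 => ps qs.
have [pq|/ltW qp] := leP `|p| `|q|.
- by apply: le_trans qs; apply: ler_wpM2r.
- by apply: le_trans ps; apply: ler_wpM2l.
Qed.

Lemma ler_norm_scaled_contraction {R : realFieldType} (f : R -> R)
    (eps p q : R) : (forall t, `|f t| <= `|t|) -> 0 < eps ->
  `|eps ^-2 * (f (eps * p) * f (eps * q))| <= `|p| * `|q|.
Proof.
move=> f_contr eps_gt0; have eps2_gt0 : 0 < eps ^+ 2 by rewrite exprn_gt0.
have -> : `|p| * `|q| = eps ^-2 * (`|eps * p| * `|eps * q|).
  by rewrite !normrM gtr0_norm // mulrACA -expr2 mulKf ?gt_eqF.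
rewrite normrM normrM gtr0_norm ?invr_gt0 //.
by apply: ler_wpM2l; [rewrite invr_ge0 ltW | apply: ler_pM].
Qed.

Lemma ler_norm_mul_le1 {R : realDomainType} (z b c e : R) :
  `|b| <= 1 -> `|c| <= 1 -> `|e| <= 1 -> `|z * b * c * e| <= `|z|.
Proof.
move=> b1 c1 e1; rewrite !normrM -[leRHS]mulr1 -!mulrA; apply: ler_wpM2l => //.
by rewrite mulr_ile1 ?mulr_ge0 ?mulr_ile1.
Qed.

Theorem lemma2 (R : realType) (dd : measure_display) (T : measurableType dd)
  (P : probability T R) (d : nat)
  (a : T -> R) (w : 'I_d -> T -> R)
  (ha : std_gaussian P a) (hw : forall i, std_gaussian P (w i))
  (hind : mutually_independent P
            (fun o : option 'I_d => match o with None => a | Some i => w i end))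
  (x y : 'I_d -> R)
  (hx : Num.sqrt (\sum_(i < d) x i ^+ 2) <= 1)
  (hy : Num.sqrt (\sum_(i < d) y i ^+ 2) <= 1)
  (sigma : R -> R)
  (hsd : forall t, derivable sigma t 1)
  (hsc : continuous (derive1 sigma))
  (hs0 : sigma 0 = 0)
  (hsb : forall t, `|derive1 sigma t| <= 1)
  (eps : R) (heps : 0 < eps) :
  let wx := fun u => \sum_(i < d) w i u * x i in
  let wy := fun u => \sum_(i < d) w i u * y i in
  (* C_{psi,d}: psi_1 norm of a chi-square variable with d degrees of freedom,
     realized as sum_i w_i^2 *)
  let C_d := psi1_norm P (fun u => \sum_(i < d) w i u ^+ 2) in
  (* C_{psi,1}: psi_1 norm of a chi-square variable with 1 degree of freedom,
     realized as a^2 *)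
  let C_1 := psi1_norm P (fun u => a u ^+ 2) in
  let X1 := fun u => eps ^-2 * (sigma (eps * wx u) * sigma (eps * wy u)) in
  let X2 := fun u => a u ^+ 2 * derive1 sigma (eps * wx u) * derive1 sigma (eps * wy u)
                     * (\sum_(i < d) x i * y i) in
  (psi1_norm P X1 <= C_d)%E /\ (psi1_norm P X2 <= C_1)%E.
Proof.
move=> wx wy C_d C_1 X1 X2.
have [x_le1 y_le1] : \sum_i x i ^+ 2 <= 1 /\ \sum_i y i ^+ 2 <= 1.
  by rewrite -!(ler_sqrt _ ler01) sqrtr1.
split; apply: le_psi1_norm => u; rewrite /X1 /X2.
- rewrite [leRHS]ger0_norm; last by apply: sumr_ge0 => i _; apply: sqr_ge0.
  have sigma_contr := ler_norm_contraction sigma hsd hs0 hsb.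
  apply: le_trans (ler_norm_scaled_contraction _ _ _ _ sigma_contr heps) _.
  by apply: ler_norm_mul_sqr; apply: sum_mul_sqr_le_unit.
- apply: ler_norm_mul_le1 => //.
  rewrite -sqrtr_sqr -sqrtr1 ler_sqrt ?ler01 //.
  by apply: le_trans (sum_mul_sqr_le x y) _; rewrite mulr_ile1 ?sumr_ge0 // => i _;
    apply: sqr_ge0.
Qed.
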